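(* Let $G$ be a finite abelian group and let $f$ be an automorphism of the monoid $\mathcal{P}_{0}(G)$. Then $f$ maps every $2$-element set in $\mathcal{P}_{0}(G)$ to a $2$-element set.
   Context: For an additively written finite abelian group $G$, $\mathcal{P}_{0}(G)$ is the monoid of all subsets of $G$ containing $0$, with setwise addition $X+Y=\{x+y : x\in X, y\in Y\}$ and identity $\{0\}$. *)

From HB Require Import structures.
From mathcomp Require Import all_boot all_algebra.
Set Implicit Arguments. Unset Strict Implicit. Unset Printing Implicit Defensive.
Import GRing.Theory.
Local Open Scope ring_scope.

Definition sumset (G : finZmodType) (X Y : {set G}) : {set G} :=
  [set x + y | x in X, y in Y].

Definition P0 (G : finZmodType) := {X : {set G} | (0 : G) \in X}.

Lemma sumset_P0 (G : finZmodType) (X Y : P0 G) : (0 : G) \in sumset (val X) (val Y).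
Proof.
have h : (0 : G) = 0 + 0 by rewrite addr0.
rewrite /sumset {1}h; exact: (imset2_f _ (valP X) (valP Y)).
Qed.

Definition P0add (G : finZmodType) (X Y : P0 G) : P0 G :=
  exist _ (sumset (val X) (val Y)) (sumset_P0 X Y).

Lemma set10 (G : finZmodType) : (0 : G) \in [set (0 : G)].
Proof. by rewrite in_set1. Qed.

Definition P0unit (G : finZmodType) : P0 G := exist _ [set (0 : G)] (set10 G).

Definition P0_automorphism (G : finZmodType) (f : P0 G -> P0 G) : Prop :=
  [/\ bijective f,
      (forall X Y : P0 G, f (P0add X Y) = P0add (f X) (f Y)) &
      f (P0unit G) = P0unit G].

From mathcomp Require Import all_boot all_algebra all_fingroup.
From mathcomp Require Import zify.
Set Implicit Arguments. Unset Strict Implicit. Unset Printing Implicit Defensive.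
Import GRing.Theory FinRing.Theory.

(* The invariant is the span H(X) of X, the value at which the increasing chain
   {0} <= X <= 2X <= ... stabilizes.  It is defined monoidally, so f (H(X)) = H(f X),
   and its size is intrinsic too: the Z in P0(G) with Z + H(X) = H(X) are exactly
   the subsets of H(X) containing 0, and there are 2^(|H(X)|-1) of them.
   For X = {0,a} we have kX <= {0, a, ..., ka}, so kX <> H(X) for k = |H(X)| - 2.
   Hence kY <> H(Y) for Y = f X; as the chain of Y gains at least one element per
   step until it stabilizes, |Y| + k <= |H(Y)| = |H(X)| = k + 2. *)


Section Iterates.
Variables (T : Type) (F : T -> T).

Lemma iter_fixed_stable x j k :
  F (iter j F x) = iter j F x -> j <= k -> iter k F x = iter j F x.
Proof. by move=> Fj /subnK <-; rewrite iterD iter_fix. Qed.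

Lemma iter_fixed_eq x i j :
  F (iter i F x) = iter i F x -> F (iter j F x) = iter j F x ->
  iter i F x = iter j F x.
Proof.
move=> Fi Fj; case: (leqP i j) => [/(iter_fixed_stable Fi) -> // | /ltnW].
exact: iter_fixed_stable.
Qed.

End Iterates.

Section SetChains.
Variable T : finType.

Lemma card_strict_chain (S : nat -> {set T}) m n :
  (forall j, S j \subset S j.+1) -> m <= n ->
  (forall j, m <= j < n -> S j != S j.+1) -> #|S m| + (n - m) <= #|S n|.
Proof.
move=> incS /subnK <-; elim: (n - m) => [|d IHd] neqS; first by rewrite addnK addn0.
have ltS : #|S (d + m)| < #|S (d + m).+1|.
  by rewrite proper_card // properEneq incS andbT neqS // leq_addl /= addSn.
have IHd' : #|S m| + (d + m - m) <= #|S (d + m)|.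
  by apply: IHd => j /andP[le_mj lt_jd]; rewrite neqS // le_mj ltnW.
rewrite addSn; lia.
Qed.

Lemma iter_card_fixed (U : Type) (v : U -> {set T}) (F : U -> U) x :
  injective v -> (forall y, v y \subset v (F y)) ->
  F (iter #|T| F x) = iter #|T| F x.
Proof.
move=> inj_v incF; pose S j := v (iter j F x).
have [j le_jT /inj_v Fj] : exists2 j, j <= #|T| & S j.+1 = S j.
  case: (boolP [exists j : 'I_#|T|.+1, S j.+1 == S j]) => [/existsP[j /eqP] | /existsPn noFix].
    by exists j; first by rewrite -ltnS.
  have growth : #|S 0| + (#|T|.+1 - 0) <= #|S #|T|.+1|.
    apply: card_strict_chain => // [j | j /= lt_jT]; first exact: incF.
    by rewrite eq_sym (noFix (Ordinal lt_jT)).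
  by have := max_card (S #|T|.+1); lia.
by rewrite -iterS !(iter_fixed_stable Fj) // leqW.
Qed.

End SetChains.

Section SumsetMonoid.
Variable G : finZmodType.
Implicit Types (A B : {set G}) (X Y Z : P0 G).

(* finalg makes G a finGroupType with (x * y)%g = x + y, so sumsets are set
   products and the fingroup library applies. *)
Lemma sumsetE A B : sumset A B = (A * B)%g.
Proof. by []. Qed.

Lemma P0addA : associative (@P0add G).
Proof. by move=> X Y Z; apply: val_inj; rewrite /= !sumsetE mulgA. Qed.

Lemma P0add_subr X Z : val Z \subset val (P0add X Z).
Proof. by rewrite /= sumsetE mulg_subr ?(valP X). Qed.

Definition P0muln X k := iter k (P0add X) (P0unit G).

Definition P0span X := P0muln X #|G|.

Lemma P0muln1 X : P0muln X 1 = X.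
Proof. by apply: val_inj; rewrite /= sumsetE -set1gE mulg1. Qed.

Lemma P0add_span X : P0add X (P0span X) = P0span X.
Proof. exact: iter_card_fixed val_inj (P0add_subr X). Qed.

Lemma P0muln_fixed_span X j k :
  P0muln X j.+1 = P0muln X j -> j <= k -> P0muln X k = P0span X.
Proof.
move=> fixj le_jk; rewrite /P0muln (iter_fixed_stable fixj le_jk).
exact: iter_fixed_eq fixj (P0add_span X).
Qed.

Lemma P0add_muln_span X k : P0add (P0muln X k) (P0span X) = P0span X.
Proof.
elim: k => [|k IHk]; first by apply: val_inj; rewrite /= sumsetE -set1gE mul1g.
by rewrite /P0muln iterS -P0addA IHk P0add_span.
Qed.

Lemma P0_sub_spanE X Z :
  (val Z \subset val (P0span X)) = (P0add Z (P0span X) == P0span X).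
Proof.
have idem_span : (val (P0span X) * val (P0span X))%g = val (P0span X).
  exact: (congr1 val (P0add_muln_span X #|G|)).
apply/idP/eqP => [sub_ZS | <-]; last by rewrite /= sumsetE mulg_subl ?(valP (P0span X)).
apply: val_inj; apply/eqP; rewrite /= sumsetE eqEsubset mulg_subr ?(valP Z) // andbT.
by apply: subset_trans (mulSg _ sub_ZS) _; rewrite idem_span.
Qed.

Lemma P0muln_sub_span X k : val (P0muln X k) \subset val (P0span X).
Proof. by rewrite P0_sub_spanE P0add_muln_span. Qed.

Lemma P0_sub_span X : val X \subset val (P0span X).
Proof. by rewrite -{1}(P0muln1 X) P0muln_sub_span. Qed.

Lemma leq_add_card_P0span Y k :
  P0muln Y k != P0span Y -> #|val Y| + k <= #|val (P0span Y)|.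
Proof.
case: k => [|k] neq_span.
  by rewrite addn0 subset_leq_card ?P0_sub_span.
pose S j := val (P0muln Y j).
have chain : #|S 1| + (k.+1 - 1) <= #|S k.+1|.
  apply: card_strict_chain => // [j | j /andP[lt0j lt_jk]]; first exact: P0add_subr.
  apply: contra neq_span => /eqP/val_inj fixj.
  by rewrite -(P0muln_fixed_span (esym fixj) (ltnW lt_jk)).
have lt_span : #|S k.+1| < #|val (P0span Y)|.
  rewrite proper_card // properEneq P0muln_sub_span andbT.
  by apply: contra neq_span => /eqP/val_inj ->.
by move: chain lt_span; rewrite /S P0muln1; lia.
Qed.

Lemma card_P0muln_pair X a k :
  val X \subset [set 0%R; a] -> #|val (P0muln X k)| <= k.+1.
Proof.
move=> sub_Xa.
suff sub_mul : val (P0muln X k) \subset [set a *+ (i : 'I_k.+1) | i : 'I_k.+1]%R.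
  by rewrite (leq_trans (subset_leq_card sub_mul)) // (leq_trans (leq_imset_card _ _)) ?card_ord.
elim: k => [|k IHk]; apply/subsetP => x.
  by rewrite inE => /eqP ->; apply/imsetP; exists ord0; rewrite ?mulr0n.
rewrite /P0muln iterS /= sumsetE => /mulsgP[u v /(subsetP sub_Xa) Xu /(subsetP IHk)].
case/imsetP=> i _ -> ->; apply/imsetP.
have /set2P[-> | ->] := Xu; [exists (widen_ord (leqnSn _) i) | exists (lift ord0 i)] => //.
  by rewrite zmodMgE add0r.
by rewrite zmodMgE /= mulrS.
Qed.

Lemma P0_eq_unit Z : #|val Z| <= 1 -> Z = P0unit G.
Proof.
move=> le_Z1; apply: val_inj; apply/esym/eqP.
by rewrite /= eqEcard sub1set (valP Z) cards1.
Qed.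

Lemma card_P0_subset (K : {set G}) :
  0%R \in K -> #|[set Z : P0 G | val Z \subset K]| = 2 ^ #|K :\ 0%R|.
Proof.
move=> K0; pose add0 A : P0 G := exist _ (0%R |: A) (setU11 0%R A).
have -> : [set Z : P0 G | val Z \subset K] = add0 @: powerset (K :\ 0%R).
  apply/setP => Z; rewrite inE; apply/idP/imsetP => [sub_ZK | [A + ->]].
    exists (val Z :\ 0%R); first by rewrite powersetE setSD.
    by apply: val_inj; rewrite /= setD1K ?(valP Z).
  by rewrite powersetE /= subUset sub1set K0 => /subset_trans; apply; apply: subsetDl.
rewrite card_in_imset ?card_powerset // => A B.
rewrite !powersetE => /subsetP subA /subsetP subB /(congr1 val) /= eqAB.
have notA0 : 0%R \notin A by apply/negP => /subA; rewrite !inE eqxx.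
have notB0 : 0%R \notin B by apply/negP => /subB; rewrite !inE eqxx.
by rewrite -(setU1K notA0) -(setU1K notB0) eqAB.
Qed.

End SumsetMonoid.

Section Automorphism.
Variables (G : finZmodType) (f : P0 G -> P0 G).
Implicit Types X Z : P0 G.
Hypothesis f_aut : P0_automorphism f.

Lemma P0_aut_inj : injective f.
Proof. by case: f_aut => /bij_inj. Qed.

Lemma P0_aut_muln X k : f (P0muln X k) = P0muln (f X) k.
Proof.
case: f_aut => _ f_add f_unit.
by elim: k => [|k IHk] //=; rewrite f_add IHk.
Qed.

Lemma P0_aut_muln_spanE X k :
  (P0muln (f X) k == P0span (f X)) = (P0muln X k == P0span X).
Proof. by rewrite /P0span -!P0_aut_muln (inj_eq P0_aut_inj). Qed.

Lemma card_P0_aut_span X : #|val (P0span (f X))| = #|val (P0span X)|.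
Proof.
case: f_aut => _ f_add _; pose subsets (K : {set G}) := [set Z : P0 G | val Z \subset K].
have sub_spanE Z : (val (f Z) \subset val (P0span (f X))) = (val Z \subset val (P0span X)).
  by rewrite !P0_sub_spanE /P0span -P0_aut_muln -f_add (inj_eq P0_aut_inj).
have subsets_preim : f @^-1: subsets (val (P0span (f X))) = subsets (val (P0span X)).
  by apply/setP => Z; rewrite !inE sub_spanE.
have : #|subsets (val (P0span (f X)))| = #|subsets (val (P0span X))|.
  by rewrite -subsets_preim card_preimset //; apply: P0_aut_inj.
rewrite !card_P0_subset ?(valP (P0span _)) // => /expnI eq_card.
by rewrite (cardsD1 0%R) (cardsD1 0%R (val _)) !(valP (P0span _)) eq_card.
Qed.

Lemma P0_aut_card_ge2 X : 2 <= #|val X| -> 2 <= #|val (f X)|.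
Proof.
case: f_aut => _ _ f_unit; rewrite !ltnNge; apply: contra => /P0_eq_unit.
by rewrite -f_unit => /P0_aut_inj ->; rewrite cards1.
Qed.

End Automorphism.

Theorem lemma2p3 (G : finZmodType) (f : P0 G -> P0 G) :
  P0_automorphism f ->
  forall X : P0 G, #|val X| = 2 -> #|val (f X)| = 2.
Proof.
move=> f_aut X card_X.
have [a sub_Xa] : exists a, val X \subset [set 0%R; a].
  have /cards1P[a Xa] : #|val X :\ 0%R| == 1.
    by move: card_X; rewrite (cardsD1 0%R) (valP X) add1n => -[->].
  by exists a; rewrite -Xa setD1K ?(valP X).
have le_X_span : #|val X| <= #|val (P0span X)|.
  by rewrite subset_leq_card ?P0_sub_span.
pose k := #|val (P0span X)| - 2.
have neq_span : P0muln X k != P0span X.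
  apply: contraTneq (card_P0muln_pair k sub_Xa) => ->; lia.
have := leq_add_card_P0span (Y := f X) (k := k).
rewrite (P0_aut_muln_spanE f_aut) (card_P0_aut_span f_aut) => /(_ neq_span).
have := P0_aut_card_ge2 f_aut (eq_leq (esym card_X)); lia.
Qed.
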